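(* Consider an environment $W$ containing a set of static sensors (closed disks at fixed positions) and a set of mobile sensors $ms_1,\ldots,ms_m$ with (possibly different) sensing radii, and let the covered area be the area of the part of $W$ covered by the union of all sensor disks. The greedy algorithm Greedy-HHP, which for $i=1,\ldots,m$ in turn moves mobile sensor $ms_i$ to the position (over the holes) that maximizes the covered area given the static sensors and the already placed mobile sensors $ms_1,\ldots,ms_{i-1}$, and then updates the holes, achieves an approximation ratio of $1/2$ for the problem of maximizing the covered area by moving the mobile sensors; i.e., the covered area it achieves is at least half of the maximum achievable covered area.
   Context: A hole is a maximal region of $W$ (outside obstacles, if any) not covered by any sensor disk. The hole healing problem asks to choose new positions for the mobile sensors so as to maximize the covered area of $W$ (equivalently, recover as much hole area as possible). *)

From HB Require Import structures.
From mathcomp Require Import all_boot all_order all_algebra.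
From mathcomp Require Import all_classical all_reals all_analysis.
Set Implicit Arguments. Unset Strict Implicit. Unset Printing Implicit Defensive.
Import Order.TTheory GRing.Theory Num.Theory.
Local Open Scope classical_set_scope.
Local Open Scope ring_scope.

Definition disk (R : realType) (c : R * R) (r : R) : set (R * R) :=
  [set x | (x.1 - c.1) ^+ 2 + (x.2 - c.2) ^+ 2 <= r ^+ 2].

Definition area (R : realType) (A : set (R * R)) : \bar R :=
  ((@lebesgue_measure R) \x (@lebesgue_measure R))%E A.

Definition static_cover (R : realType) (n : nat) (s : 'I_n -> R * R)
  (rs : 'I_n -> R) : set (R * R) :=
  \bigcup_(k in [set: 'I_n]) disk (s k) (rs k).

Definition mobile_cover (R : realType) (m : nat) (rm : 'I_m -> R)
  (p : 'I_m -> R * R) (J : set 'I_m) : set (R * R) :=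
  \bigcup_(j in J) disk (p j) (rm j).

Definition covered_area (R : realType) (W : set (R * R)) (n : nat)
  (s : 'I_n -> R * R) (rs : 'I_n -> R) (m : nat) (rm : 'I_m -> R)
  (p : 'I_m -> R * R) (J : set 'I_m) : \bar R :=
  area (W `&` (static_cover s rs `|` mobile_cover rm p J)).

(* g is a run of Greedy-HHP: for i = 1..m in turn, g i maximizes the covered
   area given the static sensors and the already placed mobile sensors j < i,
   over all admissible positions in Pos. *)
Definition greedy_HHP (R : realType) (W : set (R * R)) (Pos : set (R * R))
  (n : nat) (s : 'I_n -> R * R) (rs : 'I_n -> R) (m : nat) (rm : 'I_m -> R)
  (g : 'I_m -> R * R) : Prop :=
  forall i : 'I_m,
    Pos (g i) /\
    forall q : R * R, Pos q ->
      (area (W `&` (static_cover s rs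
                    `|` mobile_cover rm g [set j | (j < i)%N]
                    `|` disk q (rm i)))
       <= covered_area W s rs rm g [set j | (j <= i)%N])%E.

From HB Require Import structures.
From mathcomp Require Import all_boot all_order all_algebra.
From mathcomp Require Import all_classical all_reals all_analysis.
From mathcomp Require Import measurable_realfun.
Set Implicit Arguments. Unset Strict Implicit. Unset Printing Implicit Defensive.
Import Order.TTheory GRing.Theory Num.Theory.
Local Open Scope classical_set_scope.
Local Open Scope ring_scope.

(* Let G k be the region covered after k greedy steps and A k the region that
   the k-th mobile sensor covers in an optimal placement.  Since placing
   sensor k as in the optimum was a candidate at step k, the greedy gain at
   step k is at least the measure of A k outside the final greedy cover G m.
   Summing these gains bounds the part of the optimum not covered by the
   greedy solution by mu (G m); hence the optimum is at most 2 mu (G m). *)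

Section greedy_max_coverage.
Context d (T : measurableType d) (R : realType).
Variable mu : {measure set T -> \bar R}.
Variables (m : nat) (G A : nat -> set T).
Hypotheses (mG : forall k, measurable (G k)) (mA : forall k, measurable (A k)).
Hypothesis G_nondecreasing : {homo G : k l / (k <= l)%N >-> k `<=` l}.
Hypothesis greedy_step : forall k, (k < m)%N -> (mu (G k `|` A k) <= mu (G k.+1))%E.

Lemma measureU_setD (X Y : set T) : measurable X -> measurable Y ->
  mu (X `|` Y) = (mu X + mu (Y `\` X))%E.
Proof.
move=> mX mY; have -> : X `|` Y = X `|` (Y `\` X) by rewrite setUDr setDv setD0.
by apply: measureU => //; [exact: measurableD | exact: setDIK].
Qed.

Lemma greedy_gain k : (k < m)%N ->
  (mu (G k) + mu (A k `\` G m) <= mu (G k.+1))%E.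
Proof.
move=> ltkm; apply: le_trans (greedy_step ltkm).
rewrite measureU_setD //; apply: leeD2l; apply: le_measure; rewrite ?inE.
- exact: measurableD.
- exact: measurableD.
by apply: setDS; apply: G_nondecreasing; exact: ltnW.
Qed.

Lemma greedy_gains_le k : (k <= m)%N ->
  (mu (G 0) + \sum_(i < k) mu (A i `\` G m) <= mu (G k))%E.
Proof.
elim: k => [|k IHk] lekm; first by rewrite big_ord0 adde0.
rewrite big_ord_recr /= addeA.
exact: le_trans (leeD2r _ (IHk (ltnW lekm))) (greedy_gain lekm).
Qed.

Lemma greedy_cover_le :
  (mu (G m `|` \big[setU/set0]_(k < m) A k) <= mu (G m) + mu (G m))%E.
Proof.
have mAD k : `I_m k -> measurable (A k `\` G m) by move=> _; exact: measurableD.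
have mUA : measurable (\big[setU/set0]_(k < m) A k).
  by apply: bigsetU_measurable => k _; exact: mA.
rewrite measureU_setD //; apply: leeD2l.
apply: (@le_trans _ _ (\sum_(k < m) mu (A k `\` G m))).
  apply: (content_subadditive mu (F := fun k => A k `\` G m)) => //.
    exact: measurableD.
  by rewrite -bigcup_mkord setD_bigcupl bigcup_mkord.
apply: le_trans (greedy_gains_le (leqnn m)).
by apply: leeDr; exact: measure_ge0.
Qed.

Lemma greedy_half_approx (B : set T) : measurable B ->
  B `<=` G m `|` \big[setU/set0]_(k < m) A k ->
  ((2^-1)%:E * mu B <= mu (G m))%E.
Proof.
move=> mB BGA; rewrite lee_pdivrMl // mule_natl mule2n.
apply: le_trans greedy_cover_le; apply: le_measure; rewrite ?inE //.
apply: measurableU => //; apply: bigsetU_measurable => k _; exact: mA.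
Qed.

End greedy_max_coverage.

Lemma measurable_disk (R : realType) (c : R * R) (r : R) : measurable (disk c r).
Proof.
have mdist : measurable_fun setT (fun x : R * R => (x.1 - c.1) ^+ 2 + (x.2 - c.2) ^+ 2).
  by apply: measurable_funD; apply: measurable_funX; apply: measurable_funB.
by rewrite -[disk c r]setTI; exact: (mdist measurableT `]-oo, r ^+ 2]%classic).
Qed.

Lemma measurable_bigcup_disk (R : realType) (n : nat) (J : set 'I_n)
  (c : 'I_n -> R * R) (r : 'I_n -> R) :
  measurable (\bigcup_(k in J) disk (c k) (r k)).
Proof.
apply: fin_bigcup_measurable; first exact: finite_finset.
by move=> k _; exact: measurable_disk.
Qed.

Section sensor_regions.
Variables (R : realType) (W : set (R * R)) (n : nat) (s : 'I_n -> R * R)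
  (rs : 'I_n -> R) (m : nat) (rm : 'I_m -> R).
Hypothesis mW : measurable W.

Definition covered_before (g : 'I_m -> R * R) (k : nat) : set (R * R) :=
  W `&` (static_cover s rs `|` mobile_cover rm g [set j | (j < k)%N]).

Definition covered_by_sensor (p : 'I_m -> R * R) (k : nat) : set (R * R) :=
  W `&` mobile_cover rm p [set j | val j = k].

Lemma measurable_covered_before g k : measurable (covered_before g k).
Proof.
apply: measurableI => //.
by apply: measurableU; exact: measurable_bigcup_disk.
Qed.

Lemma measurable_covered_by_sensor p k : measurable (covered_by_sensor p k).
Proof. by apply: measurableI => //; exact: measurable_bigcup_disk. Qed.

Lemma covered_before_homo g :
  {homo covered_before g : k l / (k <= l)%N >-> k `<=` l}.
Proof.
move=> k l lekl x [Wx [Sx|[j ltjk gjx]]]; split=> //; [by left | right].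
by exists j; first exact: leq_trans ltjk lekl.
Qed.

Lemma covered_area_covered_before g :
  covered_area W s rs rm g setT = area (covered_before g m).
Proof.
rewrite /covered_area; congr (area (W `&` (_ `|` mobile_cover rm g _))).
by apply/seteqP; split=> j //= _; exact: ltn_ord.
Qed.

Lemma covered_sub_before_sensors g p :
  W `&` (static_cover s rs `|` mobile_cover rm p setT) `<=`
  covered_before g m `|` \big[setU/set0]_(k < m) covered_by_sensor p k.
Proof.
move=> x [Wx [Sx|[j _ pjx]]]; first by left; split=> //; left.
right; rewrite -bigcup_mkord; exists (val j); first exact: ltn_ord.
by split=> //; exists j.
Qed.

Lemma greedy_HHP_step (Pos : set (R * R)) g p :
  greedy_HHP W Pos s rs rm g -> (forall i, Pos (p i)) ->
  forall k, (k < m)%N ->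
  (area (covered_before g k `|` covered_by_sensor p k)
     <= area (covered_before g k.+1))%E.
Proof.
move=> greedy Pp k ltkm; have [_ best] := greedy (Ordinal ltkm).
apply: le_trans (best _ (Pp (Ordinal ltkm))); apply: le_measure; rewrite ?inE.
- exact: measurableU (measurable_covered_before g k) (measurable_covered_by_sensor p k).
- apply: measurableI => //; apply: measurableU; last exact: measurable_disk.
  by apply: measurableU; exact: measurable_bigcup_disk.
move=> x [[Wx [Sx|Mx]]|[Wx [j /= jk pjx]]]; split=> //.
- by do 2 left.
- by left; right.
by right; have -> : Ordinal ltkm = j by exact: val_inj.
Qed.

End sensor_regions.

Theorem theorem2 (R : realType) (W : set (R * R)) (Pos : set (R * R))
  (n : nat) (s : 'I_n -> R * R) (rs : 'I_n -> R)
  (m : nat) (rm : 'I_m -> R) (g : 'I_m -> R * R) :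
  measurable W ->
  (forall k, 0 < rs k) ->
  (forall i, 0 < rm i) ->
  greedy_HHP W Pos s rs rm g ->
  forall p : 'I_m -> R * R, (forall i, Pos (p i)) ->
  ((2^-1)%:E * covered_area W s rs rm p setT
     <= covered_area W s rs rm g setT)%E.
Proof.
move=> mW _ _ greedy p Pp. (* the radii need not be positive *)
rewrite [in X in (_ <= X)%E]covered_area_covered_before.
apply: (greedy_half_approx _ _ _ (greedy_HHP_step mW greedy Pp)).
- exact: measurable_covered_before.
- exact: measurable_covered_by_sensor.
- exact: covered_before_homo.
- apply: measurableI => //.
  by apply: measurableU; exact: measurable_bigcup_disk.
- exact: covered_sub_before_sensors.
Qed.
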